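(* There is a universal constant $c>0$ such that: for any even integer $n\ge 2$, any integer $k\ge1$, and any reals $G,\lambda>0$ with $G\ge 2\lambda$, there exist functions $f_1,\dots,f_n$ on $\mathbb{R}$ and an initialization $x_0$ satisfying Assumption (A) with parameters $n,\lambda,G$, such that for every step size $\eta>0$, SGD with random reshuffling satisfies \[ \mathbb{E}\Big[F(x_k)-\inf_xF(x)\Big]\;\ge\;c\cdot\min\left\{\lambda,\ \frac{G^2}{\lambda nk^3}\right\}. \]
   Context: Assumption (A) (parameters $n\ge 2$, $\lambda>0$, $G>0$, on $\mathbb{R}^d$): $F(x)=\frac1n\sum_{i=1}^n f_i(x)$, where each $f_i:\mathbb{R}^d\to\mathbb{R}$ is a convex quadratic function $f_i(x)=x^\top A_ix+b_i^\top x$ (with $A_i$ symmetric positive semidefinite); $F$ is $\lambda$-strongly convex with unique minimizer $x^*$; each $\nabla f_i$ is $L$-Lipschitz for some $L\le 3\lambda$; each $f_i$ satisfies $\|\nabla f_i(x)\|\le G$ for all $x$ with $\|x-x^*\|\le 1$; and the initialization satisfies $\|x_0-x^*\|\le 1$. SGD with random reshuffling with constant step size $\eta$: for each of $k$ epochs, a fresh uniformly random permutation $\pi$ of $\{1,\dots,n\}$ (independent across epochs) is drawn and the updates $x\leftarrow x-\eta\nabla f_{\pi(j)}(x)$, $j=1,\dots,n$, are performed; $x_t$ is the iterate at the end of epoch $t$. *)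

From Stdlib Require Import Reals.
From mathcomp Require Import all_boot all_fingroup.

Set Implicit Arguments.
Unset Strict Implicit.

Open Scope R_scope.


(* d = 1: f_i(x) = x^T A_i x + b_i^T x = a_i x^2 + b_i x, gradient 2 a_i x + b_i. *)
Definition quad (a b x : R) : R := a * x ^ 2 + b * x.
Definition quad_grad (a b x : R) : R := 2 * a * x + b.

Definition Favg (n : nat) (a b : 'I_n -> R) (x : R) : R :=
  / INR n * \big[Rplus/R0]_(i < n) quad (a i) (b i) x.
Definition Favg_grad (n : nat) (a b : 'I_n -> R) (x : R) : R :=
  / INR n * \big[Rplus/R0]_(i < n) quad_grad (a i) (b i) x.

Definition strongly_convex (lam : R) (F dF : R -> R) : Prop :=
  forall x y, F y >= F x + dF x * (y - x) + lam / 2 * (y - x) ^ 2.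

Definition unique_minimizer (F : R -> R) (xs : R) : Prop :=
  (forall x, F xs <= F x) /\ (forall y, (forall x, F y <= F x) -> y = xs).

Definition lipschitz (L : R) (g : R -> R) : Prop :=
  forall x y, Rabs (g x - g y) <= L * Rabs (x - y).

Definition assumption_A (n : nat) (lam G : R) (a b : 'I_n -> R) (x0 xs : R)
  : Prop :=
  (2 <= n)%N /\ 0 < lam /\ 0 < G /\
  (forall i, 0 <= a i) /\
  strongly_convex lam (Favg a b) (Favg_grad a b) /\
  unique_minimizer (Favg a b) xs /\
  (exists L, L <= 3 * lam /\ forall i, lipschitz L (quad_grad (a i) (b i))) /\
  (forall i x, Rabs (x - xs) <= 1 -> Rabs (quad_grad (a i) (b i) x) <= G) /\
  Rabs (x0 - xs) <= 1.

Definition rr_epoch (n : nat) (a b : 'I_n -> R) (eta : R) (s : 'S_n) (x : R)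
  : R :=
  foldl (fun y (j : 'I_n) => y - eta * quad_grad (a (s j)) (b (s j)) y)
        x (enum 'I_n).

Fixpoint rr_expect (n : nat) (a b : 'I_n -> R) (eta : R) (k : nat)
  (h : R -> R) (x : R) : R :=
  match k with
  | O => h x
  | S k' => / INR (n`!) *
      \big[Rplus/R0]_(s : 'S_n) rr_expect a b eta k' h (rr_epoch a b eta s x)
  end.

From HB Require Import structures.
From Stdlib Require Import Reals Lra.
From mathcomp Require Import all_boot all_fingroup zify.
Set Implicit Arguments.
Unset Strict Implicit.
Open Scope R_scope.

(* Hard instance (d = 1): f_i(x) = lam/2 x^2 + (G/2) s_i x with alternating
   signs s_i = +-1, so F(x) = lam/2 x^2, x* = 0, and we start at x0 = 1.
   With u = eta lam and q = 1 - u, one epoch along a permutation σ maps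
   x to q^n x + Z_σ, where Z_σ = sum_j w_j s_(σ j) is a linear statistic of
   the random permutation, with weights w_j proportional to q^(n-1-j).

   For the
   hard instance this yields the closed form
     E[F(x_k)] = lam/2 q^(2nk) + G^2 phi(n,k,u) / (16 lam (n-1)),
     phi(n,k,u) = u^2 * sum_(i,j<n) (q^i - q^j)^2 * sum_(t<k) q^(2nt).
   If u <= 1/(4nk), Bernoulli's inequality keeps the first term >= lam/4.
   Otherwise phi k^3 >= 2^-22, shown in three regimes (u > 1/32,
   1/(4n) < u <= 1/32, u <= 1/(4n)) by comparing a block of early powers q^i
   with a block of late powers q^j and, for the smallest steps, counting the
   ~1/(nu) epochs whose variance survives.  Hence the theorem with c = 2^-26. *)

(* Real addition is a commutative monoid law, so the generic bigop lemmas apply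
   to the sums \big[Rplus/0] used in the definitions. *)
Lemma Rplus_associative : associative Rplus.
Proof. by move=> x y z; rewrite Rplus_assoc. Qed.
HB.instance Definition _ :=
  Monoid.isComLaw.Build R 0 Rplus Rplus_associative Rplus_comm Rplus_0_l.

Lemma sumR_const (I : finType) (P : pred I) (c : R) :
  \big[Rplus/0]_(i | P i) c = INR #|P| * c.
Proof.
rewrite big_const; elim: #|P| => [|m IH]; first by rewrite /=; lra.
rewrite S_INR; change (c + iter m (Rplus c) 0 = (INR m + 1) * c); rewrite IH; lra.
Qed.

Lemma sumR_scal (J : Type) (r : seq J) (P : pred J) (c : R) (F : J -> R) :
  \big[Rplus/0]_(i <- r | P i) (c * F i) = c * \big[Rplus/0]_(i <- r | P i) F i.
Proof. by elim/big_rec2: _ => [|i y1 y2 _ ->]; lra. Qed.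

Lemma sumR_scar (J : Type) (r : seq J) (P : pred J) (c : R) (F : J -> R) :
  \big[Rplus/0]_(i <- r | P i) (F i * c) = (\big[Rplus/0]_(i <- r | P i) F i) * c.
Proof. by elim/big_rec2: _ => [|i y1 y2 _ ->]; lra. Qed.

Lemma sumR_le (J : Type) (r : seq J) (P : pred J) (F G : J -> R) :
  (forall i, P i -> F i <= G i) ->
  \big[Rplus/0]_(i <- r | P i) F i <= \big[Rplus/0]_(i <- r | P i) G i.
Proof.
move=> FG; elim/big_rec2: _ => [|i y1 y2 Pi le_y]; first lra.
have := FG i Pi; lra.
Qed.

Lemma sumR_ge0 (J : Type) (r : seq J) (P : pred J) (F : J -> R) :
  (forall i, P i -> 0 <= F i) -> 0 <= \big[Rplus/0]_(i <- r | P i) F i.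
Proof.
move=> F0; elim/big_rec: _ => [|i y Pi y0]; first lra.
have := F0 i Pi; lra.
Qed.

Lemma sumR_ge_term (I : finType) (F : I -> R) (i0 : I) :
  (forall i, 0 <= F i) -> F i0 <= \big[Rplus/0]_i F i.
Proof.
move=> F0; rewrite (bigD1 i0) //=.
have := @sumR_ge0 _ (index_enum I) (fun i => i != i0) F (fun i _ => F0 i); lra.
Qed.

Lemma INR_ge1 (n : nat) : (1 <= n)%N -> 1 <= INR n.
Proof. by move=> n_ge1; have := le_INR 1 n (elimT leP n_ge1); rewrite /=; lra. Qed.

Lemma INR_ge2 (n : nat) : (2 <= n)%N -> 2 <= INR n.
Proof. by move=> n_ge2; have := le_INR 2 n (elimT leP n_ge2); rewrite /=; lra. Qed.

Lemma INR_addn (a b : nat) : INR (a + b)%N = INR a + INR b.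
Proof. exact: plus_INR. Qed.

Lemma INR_muln (a b : nat) : INR (a * b)%N = INR a * INR b.
Proof. exact: mult_INR. Qed.

Lemma foldl_affine (T : Type) (j0 : T) (g : R -> T -> R) (q : R) (c : T -> R) :
  (forall y j, g y j = q * y + c j) -> forall l x,
  foldl g x l = q ^ (size l) * x +
    \big[Rplus/0]_(0 <= i < size l) (q ^ (size l - i.+1) * c (nth j0 l i)).
Proof.
move=> hg l; elim/last_ind: l => [|l v IH] x; first by rewrite /= big_nil; lra.
rewrite foldl_rcons hg IH size_rcons big_nat_recr //= subnn nth_rcons ltnn eqxx.
have -> : \big[Rplus/0]_(0 <= i < size l)
      (q ^ ((size l).+1 - i.+1) * c (nth j0 (rcons l v) i)) =
    \big[Rplus/0]_(0 <= i < size l) (q * (q ^ (size l - i.+1) * c (nth j0 l i))).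
  apply: eq_big_nat => i /andP [_ lt_il]; rewrite nth_rcons lt_il.
  have -> : ((size l).+1 - i.+1 = (size l - i.+1).+1)%N by lia.
  by rewrite /=; lra.
rewrite sumR_scal /=; lra.
Qed.

Definition perm_mean {n : nat} (g : 'S_n -> R) : R :=
  / INR (n`!) * \big[Rplus/0]_(σ : 'S_n) g σ.

Section PermMean.
Variable n : nat.

Lemma perm_mean_const (c : R) : perm_mean (fun _ : 'S_n => c) = c.
Proof.
have fact_pos : 0 < INR (n`!) by apply: lt_0_INR; apply/ltP; exact: fact_gt0.
rewrite /perm_mean sumR_const card_Sn; field; lra.
Qed.

Lemma perm_mean_ext (f g : 'S_n -> R) :
  (forall σ, f σ = g σ) -> perm_mean f = perm_mean g.
Proof. by move=> fg; rewrite /perm_mean (eq_bigr _ (fun σ _ => fg σ)). Qed.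

Lemma perm_mean_add (f g : 'S_n -> R) :
  perm_mean (fun σ => f σ + g σ) = perm_mean f + perm_mean g.
Proof. by rewrite /perm_mean big_split /= Rmult_plus_distr_l. Qed.

Lemma perm_mean_scal (c : R) (f : 'S_n -> R) :
  perm_mean (fun σ => c * f σ) = c * perm_mean f.
Proof. by rewrite /perm_mean sumR_scal -Rmult_assoc (Rmult_comm (/ _) c) Rmult_assoc. Qed.

Lemma perm_mean_sum (F : 'I_n -> 'S_n -> R) :
  perm_mean (fun σ => \big[Rplus/0]_(j < n) F j σ) =
  \big[Rplus/0]_(j < n) perm_mean (F j).
Proof. by rewrite /perm_mean exchange_big /= sumR_scal. Qed.

Lemma perm_mean_mulg (π : 'S_n) (g : 'S_n -> R) :
  perm_mean g = perm_mean (fun σ => g (π * σ)%g).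
Proof. by rewrite /perm_mean (reindex_inj (mulgI π)). Qed.

End PermMean.

Lemma sum_kernel_quadratic (n : nat) (w : 'I_n -> R) (κ : R) :
  \big[Rplus/0]_(i < n) \big[Rplus/0]_(j < n)
      (w i * w j * (if i == j then 1 else κ)) =
  (1 - κ) * \big[Rplus/0]_(i < n) w i ^ 2 + κ * (\big[Rplus/0]_(i < n) w i) ^ 2.
Proof.
have row : forall i, \big[Rplus/0]_(j < n) (w i * w j * (if i == j then 1 else κ)) =
                     (1 - κ) * w i ^ 2 + κ * w i * \big[Rplus/0]_(j < n) w j.
  move=> i; rewrite (bigD1 i) //= eqxx [in RHS](bigD1 i) //=.
  rewrite (eq_bigr (fun j => κ * w i * w j)); last first.
    by move=> j ne_ji; rewrite eq_sym (negbTE ne_ji); ring.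
  rewrite sumR_scal; ring.
rewrite (eq_bigr _ (fun i _ => row i)) big_split /= sumR_scal sumR_scar sumR_scal.
ring.
Qed.

Lemma sum_sq_diff (n : nat) (w : 'I_n -> R) :
  \big[Rplus/0]_(i < n) \big[Rplus/0]_(j < n) (w i - w j) ^ 2 =
  2 * INR n * \big[Rplus/0]_(i < n) w i ^ 2 - 2 * (\big[Rplus/0]_(i < n) w i) ^ 2.
Proof.
have row : forall i, \big[Rplus/0]_(j < n) (w i - w j) ^ 2 =
    INR n * w i ^ 2 + - 2 * w i * \big[Rplus/0]_(j < n) w j +
    \big[Rplus/0]_(j < n) w j ^ 2.
  move=> i; rewrite (eq_bigr (fun j => w i ^ 2 + (- 2 * w i) * w j + w j ^ 2)).
    by rewrite !big_split /= sumR_const card_ord sumR_scal.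
  by move=> j _; ring.
rewrite (eq_bigr _ (fun i _ => row i)) !big_split /= sumR_const card_ord.
rewrite sumR_scal sumR_scar sumR_scal; ring.
Qed.

Section SignedPermutation.
Variable n : nat.
Hypothesis n_ge2 : (2 <= n)%N.
Variable s : 'I_n -> R.
Hypothesis s_sum0 : \big[Rplus/0]_(i < n) s i = 0.
Hypothesis s_sq1 : forall i, s i * s i = 1.

Let N_ge2 : 2 <= INR n := INR_ge2 n_ge2.

Let sum_s_perm (σ : 'S_n) : \big[Rplus/0]_(j < n) s (σ j) = 0.
Proof. by move: s_sum0; rewrite (reindex_inj (@perm_inj _ σ)). Qed.

Lemma perm_mean_sign (j : 'I_n) : perm_mean (fun σ : 'S_n => s (σ j)) = 0.
Proof.
have same : forall j', perm_mean (fun σ : 'S_n => s (σ j')) =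
                       perm_mean (fun σ : 'S_n => s (σ j)).
  move=> j'; rewrite (perm_mean_mulg (tperm j' j)).
  by apply: perm_mean_ext => σ; rewrite permM tpermL.
have : \big[Rplus/0]_(j' < n) perm_mean (fun σ : 'S_n => s (σ j')) = 0.
  by rewrite -perm_mean_sum (perm_mean_ext sum_s_perm) perm_mean_const.
rewrite (eq_bigr _ (fun j' _ => same j')) sumR_const card_ord => h.
have := N_ge2; nra.
Qed.

Lemma perm_mean_sign_prod (i j : 'I_n) :
  perm_mean (fun σ : 'S_n => s (σ i) * s (σ j)) =
  if i == j then 1 else - / (INR n - 1).
Proof.
have diag : perm_mean (fun σ : 'S_n => s (σ i) * s (σ i)) = 1.
  by rewrite (perm_mean_ext (fun σ => s_sq1 (σ i))) perm_mean_const.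
case: eqP => [<- // | /eqP ne_ij].
have same : forall j', j' != i ->
    perm_mean (fun σ : 'S_n => s (σ i) * s (σ j')) =
    perm_mean (fun σ : 'S_n => s (σ i) * s (σ j)).
  move=> j' ne_j'i; rewrite (perm_mean_mulg (tperm j' j)).
  by apply: perm_mean_ext => σ; rewrite !permM tpermL tpermD // eq_sym.
have : \big[Rplus/0]_(j' < n) perm_mean (fun σ : 'S_n => s (σ i) * s (σ j')) = 0.
  rewrite -perm_mean_sum (perm_mean_ext (g := fun _ => 0)) ?perm_mean_const //.
  by move=> σ; rewrite sumR_scal sum_s_perm Rmult_0_r.
rewrite (bigD1 i) //= diag (eq_bigr _ (fun j' => same j')) sumR_const cardC1.
rewrite card_ord -subn1 minus_INR /=; last by apply/leP; lia.
set k := perm_mean _ => h.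
field_simplify_eq; nra.
Qed.

Definition perm_stat (w : 'I_n -> R) (σ : 'S_n) : R :=
  \big[Rplus/0]_(j < n) (w j * s (σ j)).

Lemma perm_stat_mean (w : 'I_n -> R) : perm_mean (perm_stat w) = 0.
Proof.
rewrite perm_mean_sum big1 // => j _.
by rewrite (perm_mean_scal (w j) (fun σ => s (σ j))) perm_mean_sign Rmult_0_r.
Qed.

Lemma perm_stat_second_moment (w : 'I_n -> R) :
  perm_mean (fun σ => perm_stat w σ * perm_stat w σ) =
  \big[Rplus/0]_(i < n) \big[Rplus/0]_(j < n) (w i - w j) ^ 2 / (2 * (INR n - 1)).
Proof.
rewrite (perm_mean_ext (g := fun σ => \big[Rplus/0]_(i < n) \big[Rplus/0]_(j < n)
                              (w i * w j * (s (σ i) * s (σ j))))); last first.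
  move=> σ; rewrite /perm_stat -sumR_scar; apply: eq_bigr => i _.
  rewrite -sumR_scal; apply: eq_bigr => j _; ring.
rewrite perm_mean_sum (eq_bigr (fun i => \big[Rplus/0]_(j < n)
           (w i * w j * (if i == j then 1 else - / (INR n - 1))))); last first.
  move=> i _; rewrite perm_mean_sum; apply: eq_bigr => j _.
  by rewrite perm_mean_scal perm_mean_sign_prod.
rewrite sum_kernel_quadratic sum_sq_diff; field; lra.
Qed.

End SignedPermutation.

Definition alt_sign {n : nat} (i : 'I_n) : R := if odd i then -1 else 1.

Lemma alt_sign_sum (n : nat) : ~~ odd n -> \big[Rplus/0]_(i < n) alt_sign i = 0.
Proof.
move=> n_even; rewrite /alt_sign -(big_mkord xpredT (fun i => if odd i then -1 else 1)).
rewrite -[n]odd_double_half (negbTE n_even) add0n.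
elim: n./2 => [|m IH]; first by rewrite big_nil.
by rewrite doubleS !big_nat_recr //= IH odd_double /=; lra.
Qed.

Lemma alt_sign_sq (n : nat) (i : 'I_n) : alt_sign i * alt_sign i = 1.
Proof. by rewrite /alt_sign; case: (odd i); lra. Qed.

Lemma alt_sign_abs (n : nat) (i : 'I_n) : Rabs (alt_sign i) = 1.
Proof. by rewrite /alt_sign; case: (odd i); rewrite ?Rabs_Ropp Rabs_R1. Qed.

Fixpoint geo (z : R) (k : nat) : R :=
  if k is k'.+1 then geo z k' + z ^ k' else 0.

Definition power_spread (n : nat) (q : R) : R :=
  \big[Rplus/0]_(i < n) \big[Rplus/0]_(j < n) (q ^ i - q ^ j) ^ 2.

Section HardInstance.
Variables (n : nat) (lam G : R).
Hypothesis n_ge2 : (2 <= n)%N.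
Hypothesis n_even : ~~ odd n.

Definition hard_a : 'I_n -> R := fun _ => lam / 2.
Definition hard_b : 'I_n -> R := fun i => G / 2 * alt_sign i.

Let N_ge2 : 2 <= INR n := INR_ge2 n_ge2.

Let sum_hard_b : \big[Rplus/0]_(i < n) hard_b i = 0.
Proof. by rewrite /hard_b sumR_scal alt_sign_sum // Rmult_0_r. Qed.

(* Since the linear parts cancel on average, F(x) = lam/2 x^2 and F'(x) = lam x. *)
Lemma hard_F (x : R) : Favg hard_a hard_b x = lam / 2 * x ^ 2.
Proof.
rewrite /Favg /quad /hard_a big_split /= sumR_const card_ord sumR_scar sum_hard_b.
field; lra.
Qed.

Lemma hard_grad (x : R) : Favg_grad hard_a hard_b x = lam * x.
Proof.
rewrite /Favg_grad /quad_grad /hard_a big_split /= sumR_const card_ord sum_hard_b.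
field; lra.
Qed.

(* Assumption (A) holds with L = lam and x* = 0; the gradient bound
   |lam x + (G/2) s_i| <= G on |x| <= 1 is where G >= 2 lam is used. *)
Lemma hard_assumption_A :
  0 < lam -> 0 < G -> G >= 2 * lam -> assumption_A lam G hard_a hard_b 1 0.
Proof.
move=> lam_gt0 G_gt0 G_ge; do 3 (split; first by []).
split; first by move=> i; rewrite /hard_a; lra.
split.
  move=> x y; rewrite !hard_F hard_grad.
  have := pow2_ge_0 (y - x); nra.
split.
  split=> [x|y y_min]; rewrite ?hard_F; first by have := pow2_ge_0 x; nra.
  have := y_min 0; rewrite !hard_F => h.
  by apply: Rsqr_0_uniq; rewrite /Rsqr; have := pow2_ge_0 y; nra.
split.
  exists lam; split=> [|i x y]; first lra.
  rewrite /quad_grad /hard_a.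
  have -> : 2 * (lam / 2) * x + hard_b i - (2 * (lam / 2) * y + hard_b i) =
            lam * (x - y) by field.
  by rewrite Rabs_mult Rabs_pos_eq; lra.
split; last by rewrite Rminus_0_r Rabs_R1; lra.
move=> i x; rewrite Rminus_0_r /quad_grad /hard_a /hard_b => x_le1.
apply: Rle_trans (Rabs_triang _ _) _.
have -> : 2 * (lam / 2) * x = lam * x by field.
rewrite !Rabs_mult alt_sign_abs !(Rabs_pos_eq lam) ?(Rabs_pos_eq G) ?(Rabs_pos_eq (/ 2));
  try lra.
have := Rabs_pos x; nra.
Qed.

Variable eta : R.

Definition epoch_weight (j : 'I_n) : R :=
  - (eta * (G / 2)) * (1 - eta * lam) ^ (n - j.+1).

Lemma hard_epoch (σ : 'S_n) (x : R) :
  rr_epoch hard_a hard_b eta σ x =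
  (1 - eta * lam) ^ n * x + perm_stat alt_sign epoch_weight σ.
Proof.
have j0 : 'I_n by exists 0%N; lia.
rewrite /rr_epoch (@foldl_affine _ j0 _ (1 - eta * lam)
  (fun j => - (eta * (G / 2)) * alt_sign (σ j))); last first.
  by move=> y j; rewrite /quad_grad /hard_a /hard_b; field.
rewrite -cardT card_ord big_mkord /perm_stat; congr (_ + _); apply: eq_bigr => i _.
by rewrite nth_ord_enum /epoch_weight; ring.
Qed.

Lemma epoch_variance :
  perm_mean (fun σ => perm_stat alt_sign epoch_weight σ *
                      perm_stat alt_sign epoch_weight σ) =
  (eta * (G / 2)) ^ 2 * power_spread n (1 - eta * lam) / (2 * (INR n - 1)).
Proof.
have rev : forall F : nat -> R,
    \big[Rplus/0]_(i < n) F (n - i.+1)%N = \big[Rplus/0]_(i < n) F i.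
  by move=> F; rewrite -(big_mkord xpredT F) big_rev_mkord subn0.
rewrite (perm_stat_second_moment n_ge2 (alt_sign_sum n_even) (@alt_sign_sq n)).
congr (_ / _); rewrite /power_spread -sumR_scal.
set q := 1 - eta * lam; set c := eta * (G / 2).
rewrite -(rev (fun a => c ^ 2 * \big[Rplus/0]_(j < n) (q ^ a - q ^ j) ^ 2)).
apply: eq_bigr => i _; rewrite -sumR_scal.
rewrite -(rev (fun b => c ^ 2 * (q ^ (n - i.+1) - q ^ b) ^ 2)).
by apply: eq_bigr => j _; rewrite /epoch_weight -/q -/c; ring.
Qed.

(* One epoch maps a quadratic A y^2 + B of the iterate, in expectation, to a
   quadratic of the previous iterate: the mean of Z vanishes and E Z^2 is V. *)
Lemma epoch_mean_quadratic (A B x : R) :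
  perm_mean (fun σ => A * rr_epoch hard_a hard_b eta σ x ^ 2 + B) =
  A * ((1 - eta * lam) ^ n) ^ 2 * x ^ 2 +
  A * ((eta * (G / 2)) ^ 2 * power_spread n (1 - eta * lam) / (2 * (INR n - 1))) + B.
Proof.
set p := (1 - eta * lam) ^ n; set Z := perm_stat alt_sign epoch_weight.
rewrite (perm_mean_ext (g := fun σ => (A * p ^ 2 * x ^ 2 + B) +
                               ((2 * A * p * x) * Z σ + A * (Z σ * Z σ)))); last first.
  by move=> σ; rewrite hard_epoch -/p -/Z; ring.
rewrite !perm_mean_add !perm_mean_const !perm_mean_scal perm_stat_mean //; last first.
  exact: alt_sign_sum.
have N2 := N_ge2; rewrite epoch_variance; field; lra.
Qed.

Lemma hard_rr_expect (k : nat) (x : R) :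
  rr_expect hard_a hard_b eta k (fun y => Favg hard_a hard_b y - Favg hard_a hard_b 0) x =
  lam / 2 * (((1 - eta * lam) ^ n) ^ 2) ^ k * x ^ 2 +
  lam / 2 * ((eta * (G / 2)) ^ 2 * power_spread n (1 - eta * lam) / (2 * (INR n - 1))) *
    geo (((1 - eta * lam) ^ n) ^ 2) k.
Proof.
have N2 := N_ge2.
elim: k x => [|k IH] x; first by rewrite /= !hard_F; field; lra.
set err := fun y => _.
transitivity (perm_mean (fun σ => rr_expect hard_a hard_b eta k err
                                     (rr_epoch hard_a hard_b eta σ x))); first by [].
rewrite (perm_mean_ext (fun σ => IH _)) epoch_mean_quadratic /=; field; lra.
Qed.

End HardInstance.

Lemma bernoulli (u : R) (m : nat) : 0 <= u <= 1 -> 1 - INR m * u <= (1 - u) ^ m.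
Proof.
move=> u01; elim: m => [|m IH]; first by rewrite /=; lra.
rewrite S_INR /=; have := pow_le (1 - u) m ltac:(lra); have := pos_INR m; nra.
Qed.

Lemma bernoulli_upper (u : R) (m : nat) :
  0 <= u <= 1 -> (1 - u) ^ m * (1 + INR m * u) <= 1.
Proof.
move=> u01; elim: m => [|m IH]; first by rewrite /=; lra.
rewrite S_INR /=; have y_ge0 := pow_le (1 - u) m ltac:(lra).
have step : (1 - u) * (1 + (INR m + 1) * u) <= 1 + INR m * u.
  by have := pos_INR m; nra.
have := Rmult_le_compat_l _ _ _ y_ge0 step; lra.
Qed.

Lemma pow_antitone (q : R) (a b : nat) : 0 <= q <= 1 -> (a <= b)%N -> q ^ b <= q ^ a.
Proof.
move=> q01 le_ab; rewrite -(subnKC le_ab) pow_add.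
have := pow_le q a ltac:(lra); have := pow_le q (b - a) ltac:(lra).
have := pow_incr q 1 (b - a) q01; rewrite pow1; nra.
Qed.

Lemma geo_mono (z : R) (k k' : nat) : 0 <= z -> (k' <= k)%N -> geo z k' <= geo z k.
Proof.
move=> z_ge0; elim: k => [|k IH] le_k'k.
  by rewrite (_ : k' = 0%N); [exact: Rle_refl | lia].
case: (leqP k' k) => [le_k'k' | lt_kk'].
  by have := IH le_k'k'; have := pow_le z k z_ge0; rewrite /=; lra.
by rewrite (_ : k' = k.+1); [exact: Rle_refl | lia].
Qed.

Lemma geo_ge0 (z : R) (k : nat) : 0 <= z -> 0 <= geo z k.
Proof. by move=> z_ge0; exact: (geo_mono z_ge0 (leq0n k)). Qed.

Lemma geo_ge1 (z : R) (k : nat) : 0 <= z -> (1 <= k)%N -> 1 <= geo z k.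
Proof. by move=> z_ge0 k_ge1; have := geo_mono z_ge0 k_ge1; rewrite /=; lra. Qed.

Lemma geo_lb (z : R) (m : nat) : 0 <= z <= 1 -> INR m * z ^ m <= geo z m.
Proof.
move=> z01; elim: m => [|m IH]; first by rewrite /=; lra.
rewrite S_INR /=; have zm_ge0 := pow_le z m (proj1 z01).
have shrink : z * z ^ m <= z ^ m by nra.
have := pos_INR m; nra.
Qed.

Lemma nat_approx (x : R) : 1 <= x -> exists m : nat, (1 <= m)%N /\ INR m <= x <= 2 * INR m.
Proof.
move=> x_ge1; have [up_gt up_le] := archimed x.
have up_gt1 : (1 < up x)%Z by apply: lt_IZR; lra.
have up_ge2 : 2 <= IZR (up x) by apply: IZR_le; lia.
exists (Z.to_nat (up x - 1)); split; first lia.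
rewrite INR_IZR_INZ Znat.Z2Nat.id ?minus_IZR; [lra | lia].
Qed.

Lemma sum_ord_prefix (n p : nat) (c : R) :
  \big[Rplus/0]_(i < n) (if (i < p)%N then c else 0) = INR (minn n p) * c.
Proof.
rewrite -(big_mkord xpredT (fun i => if (i < p)%N then c else 0)).
elim: n => [|n IH]; first by rewrite big_nil min0n /=; lra.
rewrite big_nat_recr // IH; case: (ltnP n p) => [lt_np | le_pn].
  have -> : minn n.+1 p = n.+1 by lia.
  by rewrite S_INR /=; lra.
have -> : minn n.+1 p = p by lia.
by rewrite /=; lra.
Qed.

Lemma sum_ord_suffix (n m : nat) (c : R) :
  \big[Rplus/0]_(i < n) (if (m <= i)%N then c else 0) = INR (n - m) * c.
Proof.
rewrite -(big_mkord xpredT (fun i => if (m <= i)%N then c else 0)).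
elim: n => [|n IH]; first by rewrite big_nil sub0n /=; lra.
rewrite big_nat_recr // IH; case: (leqP m n) => [le_mn | lt_nm].
  have -> : (n.+1 - m = (n - m).+1)%N by lia.
  by rewrite S_INR /=; lra.
have -> : (n.+1 - m = 0)%N by lia.
have -> : (n - m = 0)%N by lia.
by rewrite /=; lra.
Qed.

Lemma power_spread_row_ge0 (n : nat) (q : R) (i : nat) :
  0 <= \big[Rplus/0]_(j < n) (q ^ i - q ^ j) ^ 2.
Proof. by apply: sumR_ge0 => j _; apply: pow2_ge_0. Qed.

Lemma power_spread_ge0 (n : nat) (q : R) : 0 <= power_spread n q.
Proof. by apply: sumR_ge0 => i _; apply: power_spread_row_ge0. Qed.

(* The pair (i, j) = (0, 1) alone gives a bound useful for large steps. *)
Lemma power_spread_first_pair (n : nat) (q : R) :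
  (2 <= n)%N -> (1 - q) ^ 2 <= power_spread n q.
Proof.
move=> n_ge2; have i0 : (0 < n)%N by lia.
have i1 : (1 < n)%N by lia.
rewrite /power_spread.
apply: Rle_trans (sumR_ge_term (Ordinal i0) (fun i : 'I_n => power_spread_row_ge0 n q i)).
apply: Rle_trans (sumR_ge_term (Ordinal i1) (fun j : 'I_n => pow2_ge_0 _)).
by rewrite /= !Rmult_1_r; lra.
Qed.

Lemma power_gap_lb (u : R) (p : nat) :
  0 <= u -> INR p * u <= / 2 -> INR p * u / 4 <= (1 - u) ^ p * (1 - (1 - u) ^ p).
Proof.
move=> u_ge0 pu_le; have [-> | p_gt0] := posnP p; first by rewrite /=; lra.
have u01 : 0 <= u <= 1.
  by have := INR_ge1 p_gt0; nra.
have low := bernoulli p u01; have up := bernoulli_upper p u01.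
set y := (1 - u) ^ p in low up *; set P := INR p * u in pu_le low up *.
have P_ge0 : 0 <= P by have := pos_INR p; rewrite /P; nra.
have y_half : / 2 <= y by lra.
have yP : y * P <= 1 - y by lra.
have yyP : y * (y * P) <= y * (1 - y) by apply: Rmult_le_compat_l; lra.
have yy : / 4 <= y * y by nra.
have := Rmult_le_compat_r P _ _ P_ge0 yy; lra.
Qed.

(* Block bound: pairs i < p and j >= 2p - 1 each contribute (p u / 4)^2. *)
Lemma power_spread_block (n p : nat) (u : R) :
  (1 <= p)%N -> (2 * p <= n + 1)%N -> 0 <= u -> INR p * u <= / 2 ->
  INR p * (INR n + 1 - 2 * INR p) * (INR p * u / 4) ^ 2 <= power_spread n (1 - u).
Proof.
move=> p_ge1 le_2p u_ge0 pu_le.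
set q := 1 - u; set gap := INR p * u / 4.
have u01 : 0 <= u <= 1.
  by have := INR_ge1 p_ge1; nra.
have q01 : 0 <= q <= 1 by rewrite /q; lra.
have gap_ge0 : 0 <= gap by have := pos_INR p; rewrite /gap; nra.
have pair : forall i j : nat, (i < p)%N -> (2 * p - 1 <= j)%N ->
    gap ^ 2 <= (q ^ i - q ^ j) ^ 2.
  move=> i j lt_ip le_j; apply: pow_incr; split=> //.
  have qi : q ^ (p - 1) <= q ^ i by apply: pow_antitone => //; lia.
  have qj : q ^ j <= q ^ (p - 1) * q ^ p.
    by rewrite -pow_add; apply: pow_antitone => //; lia.
  have qp : q ^ p <= q ^ (p - 1) by apply: pow_antitone => //; lia.
  have qp1 : q ^ p <= 1 by rewrite -(pow_O q); apply: pow_antitone.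
  have shrink : q ^ p * (1 - q ^ p) <= q ^ (p - 1) * (1 - q ^ p).
    by apply: Rmult_le_compat_r; lra.
  have := power_gap_lb u_ge0 pu_le; rewrite -/q -/gap; lra.
have row : forall i : 'I_n,
    (if (i < p)%N then INR (n - (2 * p - 1)) * gap ^ 2 else 0) <=
    \big[Rplus/0]_(j < n) (q ^ i - q ^ j) ^ 2.
  move=> i; case: ifP => lt_ip; last exact: power_spread_row_ge0.
  rewrite -sum_ord_suffix; apply: sumR_le => j _.
  by case: ifP => le_j; [exact: pair | exact: pow2_ge_0].
rewrite /power_spread; apply: Rle_trans (sumR_le _ (fun (i : 'I_n) _ => row i)).
rewrite sum_ord_prefix; have -> : minn n p = p by lia.
rewrite minus_INR; last by apply/leP; lia.
rewrite minus_INR ?mult_INR /=; last by apply/leP; lia.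
lra.
Qed.

Lemma contraction_half (n m : nat) (u : R) :
  0 <= u <= 1 -> 4 * INR n * INR m * u <= 1 -> / 2 <= (((1 - u) ^ n) ^ 2) ^ m.
Proof.
move=> u01 small; rewrite -!pow_mult.
apply: Rle_trans (bernoulli _ u01); rewrite !mult_INR.
have two : INR 2 = 2 by rewrite /=; lra.
by rewrite two; lra.
Qed.

Lemma contraction_factor_01 (n : nat) (u : R) :
  0 <= u <= 1 -> 0 <= ((1 - u) ^ n) ^ 2 <= 1.
Proof.
move=> u01; split; first exact: pow2_ge_0.
have := pow_le (1 - u) n ltac:(lra).
have := pow_incr (1 - u) 1 n ltac:(lra); rewrite pow1; nra.
Qed.

Lemma geo_lb_half (z : R) (m k : nat) :
  0 <= z <= 1 -> (m <= k)%N -> / 2 <= z ^ m -> INR m / 2 <= geo z k.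
Proof.
move=> z01 le_mk zm; apply: Rle_trans (geo_mono (proj1 z01) le_mk).
apply: Rle_trans (geo_lb m z01); have := pos_INR m; nra.
Qed.

(* The variance term of the hard instance as a function of u = eta lam. *)
Definition phi (n k : nat) (u : R) : R :=
  u ^ 2 * power_spread n (1 - u) * geo (((1 - u) ^ n) ^ 2) k.

Lemma phi_ge0 (n k : nat) (u : R) : 0 <= phi n k u.
Proof.
apply: Rmult_le_pos; last exact/geo_ge0/pow2_ge_0.
by apply: Rmult_le_pos; [apply: pow2_ge_0 | apply: power_spread_ge0].
Qed.

(* Large steps, u > 1/32: the first pair of powers already suffices. *)
Lemma phi_large (n k : nat) (u : R) :
  (2 <= n)%N -> (1 <= k)%N -> / 32 < u -> / 4194304 <= phi n k u.
Proof.
move=> n_ge2 k_ge1 u_large; rewrite /phi.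
have D_ge := power_spread_first_pair (1 - u) n_ge2.
rewrite (_ : 1 - (1 - u) = u) in D_ge; last ring.
have g_ge := geo_ge1 (pow2_ge_0 ((1 - u) ^ n)) k_ge1.
have u4 : (/ 32) ^ 4 <= u ^ 4 by apply: pow_incr; lra.
have uD : u ^ 4 <= u ^ 2 * power_spread n (1 - u).
  by rewrite (_ : u ^ 4 = u ^ 2 * u ^ 2); [apply: Rmult_le_compat_l; [apply: pow2_ge_0 |] | ring].
have uD_ge0 : 0 <= u ^ 2 * power_spread n (1 - u) by have := pow_le u 4; lra.
have := Rmult_le_compat_l _ _ _ uD_ge0 g_ge; rewrite /= in u4 *; lra.
Qed.

(* Medium steps, 1/(4n) < u <= 1/32: a block of about 1/(16u) early powers
   is separated from the last n/2 powers by a gap of order one. *)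
Lemma phi_medium (n k : nat) (u : R) :
  (2 <= n)%N -> (1 <= k)%N -> / (4 * INR n) < u -> u <= / 32 ->
  / 4194304 <= phi n k u.
Proof.
move=> n_ge2 k_ge1 u_low u_high.
have N_ge2 := INR_ge2 n_ge2.
have u_pos : 0 < u by apply: Rlt_trans u_low; apply: Rinv_0_lt_compat; lra.
have Nu : / 4 < INR n * u.
  have := Rmult_lt_compat_l (4 * INR n) _ _ ltac:(lra) u_low.
  by rewrite Rinv_r; lra.
have [p [p_ge1 [p_le p_ge]]] : exists p : nat, (1 <= p)%N /\ INR p <= / (16 * u) <= 2 * INR p.
  by apply: nat_approx; rewrite -Rinv_1; apply: Rinv_le_contravar; lra.
have inv16 : / (16 * u) * (16 * u) = 1 by field; lra.
have pu_high : INR p * u <= / 16 by nra.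
have pu_low : / 32 <= INR p * u by nra.
have le_2p : (2 * p <= n + 1)%N.
  by apply/leP; apply: INR_le; rewrite INR_addn INR_muln /=; nra.
have D_ge := power_spread_block p_ge1 le_2p (Rlt_le _ _ u_pos) ltac:(lra).
set R' := INR n + 1 - 2 * INR p in D_ge.
have uR : / 8 <= u * R' by rewrite /R'; nra.
have gap : / 128 <= INR p * u / 4 by lra.
have core : / 32 * / 8 * (/ 128) ^ 2 <= (INR p * u) * (u * R') * (INR p * u / 4) ^ 2.
  apply: Rmult_le_compat; [lra | exact: pow2_ge_0 | | by apply: pow_incr; lra].
  by apply: Rmult_le_compat; lra.
have uD : / 4194304 <= u ^ 2 * power_spread n (1 - u).
  have := Rmult_le_compat_l (u ^ 2) _ _ (pow2_ge_0 u) D_ge.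
  rewrite (_ : u ^ 2 * (INR p * R' * (INR p * u / 4) ^ 2) =
               (INR p * u) * (u * R') * (INR p * u / 4) ^ 2); last ring.
  by rewrite /= in core; lra.
have g_ge := geo_ge1 (pow2_ge_0 ((1 - u) ^ n)) k_ge1.
have uD_ge0 : 0 <= u ^ 2 * power_spread n (1 - u) by lra.
rewrite /phi; have := Rmult_le_compat_l _ _ _ uD_ge0 g_ge; lra.
Qed.

(* Small steps, n u <= 1/4: the first third of the powers is separated from
   the last third by a gap of order n u. *)
Lemma spread_small_steps (n : nat) (u : R) :
  (2 <= n)%N -> 0 < u -> INR n * u <= / 4 ->
  (INR n * u) ^ 4 / 4096 <= u ^ 2 * power_spread n (1 - u).
Proof.
move=> n_ge2 u_pos Nu_high; have N_ge2 := INR_ge2 n_ge2.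
set p := ((n + 1) %/ 3)%N.
have p_ge1 : (1 <= p)%N by rewrite /p; lia.
have [le_3p le_n4p] : (3 * p <= n + 1)%N /\ (n <= 4 * p)%N by rewrite /p; lia.
have P3 : 3 * INR p <= INR n + 1.
  by have := le_INR _ _ (elimT leP le_3p); rewrite INR_muln INR_addn /=; lra.
have P4 : INR n <= 4 * INR p.
  by have := le_INR _ _ (elimT leP le_n4p); rewrite INR_muln /=; lra.
have pu_high : INR p * u <= / 2.
  have := Rmult_le_compat_r u _ _ (Rlt_le _ _ u_pos) P3.
  have := Rmult_le_compat_r u _ _ (Rlt_le _ _ u_pos) N_ge2; lra.
have le_2p : (2 * p <= n + 1)%N by lia.
have D_ge := power_spread_block p_ge1 le_2p (Rlt_le _ _ u_pos) pu_high.
set a := INR p * u in pu_high D_ge.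
have a_ge : INR n * u / 4 <= a by rewrite /a; nra.
have sq1 : (INR n * u / 4) ^ 2 <= a ^ 2 by apply: pow_incr; nra.
have sq2 : (INR n * u / 16) ^ 2 <= (a / 4) ^ 2 by apply: pow_incr; nra.
have prod : (INR n * u / 4) ^ 2 * (INR n * u / 16) ^ 2 <= a ^ 2 * (a / 4) ^ 2.
  by apply: Rmult_le_compat => //; apply: pow2_ge_0.
have wider : u ^ 2 * (INR p * INR p * (a / 4) ^ 2) <=
             u ^ 2 * (INR p * (INR n + 1 - 2 * INR p) * (a / 4) ^ 2).
  apply: Rmult_le_compat_l; first exact: pow2_ge_0.
  apply: Rmult_le_compat_r; first exact: pow2_ge_0.
  by apply: Rmult_le_compat_l; [apply: pos_INR | lra].
have := Rmult_le_compat_l (u ^ 2) _ _ (pow2_ge_0 u) D_ge.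
rewrite (_ : (INR n * u) ^ 4 / 4096 = (INR n * u / 4) ^ 2 * (INR n * u / 16) ^ 2);
  last field.
rewrite (_ : u ^ 2 * (INR p * INR p * (a / 4) ^ 2) = a ^ 2 * (a / 4) ^ 2) in wider;
  last by rewrite /a; ring.
lra.
Qed.

(* Small steps with 1/4 < n u k: about 1/(4 n u) <= k epochs each keep at
   least half of the injected variance. *)
Lemma geo_small_steps (n k : nat) (u : R) :
  (2 <= n)%N -> 0 < u -> INR n * u <= / 4 -> / 4 < INR n * u * INR k ->
  / (16 * INR n * u) <= geo (((1 - u) ^ n) ^ 2) k.
Proof.
move=> n_ge2 u_pos Nu_high NuK; have N_ge2 := INR_ge2 n_ge2.
have Nu_pos : 0 < INR n * u by nra.
have [m [m_ge1 [m_le m_ge]]] :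
    exists m : nat, (1 <= m)%N /\ INR m <= / (4 * INR n * u) <= 2 * INR m.
  by apply: nat_approx; rewrite -Rinv_1; apply: Rinv_le_contravar; lra.
have inv4 : / (4 * INR n * u) * (4 * INR n * u) = 1 by field; lra.
have mNu : 4 * INR n * INR m * u <= 1 by nra.
have le_mk : (m <= k)%N by apply/leP/INR_le; nra.
have u01 : 0 <= u <= 1 by nra.
have := geo_lb_half (contraction_factor_01 n u01) le_mk (contraction_half u01 mNu).
by rewrite (_ : / (16 * INR n * u) = / (4 * INR n * u) / 4); [lra | field; lra].
Qed.

(* Small steps, 1/(4nk) < u <= 1/(4n): phi k^3 >= (n u k)^3 / 2^16. *)
Lemma phi_small (n k : nat) (u : R) :
  (2 <= n)%N -> (1 <= k)%N -> / (4 * INR n * INR k) < u -> u <= / (4 * INR n) ->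
  / 4194304 <= phi n k u * INR k ^ 3.
Proof.
move=> n_ge2 k_ge1 u_low u_high.
have N_ge2 := INR_ge2 n_ge2; have K_ge1 := INR_ge1 k_ge1.
have u_pos : 0 < u by apply: Rlt_trans u_low; apply: Rinv_0_lt_compat; nra.
have Nu_high : INR n * u <= / 4.
  have := Rmult_le_compat_l (4 * INR n) _ _ ltac:(lra) u_high.
  by rewrite Rinv_r; lra.
have NuK : / 4 < INR n * u * INR k.
  have := Rmult_lt_compat_l (4 * INR n * INR k) _ _ ltac:(nra) u_low.
  by rewrite Rinv_r; nra.
have uDg : (INR n * u) ^ 4 / 4096 * / (16 * INR n * u) <= phi n k u.
  apply: Rmult_le_compat; last exact: geo_small_steps.
  - by apply: Rmult_le_pos; [apply: pow_le; nra | lra].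
  - by apply: Rlt_le; apply: Rinv_0_lt_compat; nra.
  - exact: spread_small_steps.
have cube : (/ 4) ^ 3 <= (INR n * u * INR k) ^ 3 by apply: pow_incr; lra.
have := Rmult_le_compat_r (INR k ^ 3) _ _ (pow_le (INR k) 3 ltac:(lra)) uDg.
rewrite (_ : (INR n * u) ^ 4 / 4096 * / (16 * INR n * u) * INR k ^ 3 =
             (INR n * u * INR k) ^ 3 / 65536); last by field; nra.
rewrite /= in cube; lra.
Qed.

Lemma phi_lb (n k : nat) (u : R) :
  (2 <= n)%N -> (1 <= k)%N -> / (4 * INR n * INR k) < u ->
  / 4194304 <= phi n k u * INR k ^ 3.
Proof.
move=> n_ge2 k_ge1 u_low.
have K3 : 1 <= INR k ^ 3.
  exact/pow_R1_Rle/INR_ge1.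
have phi_K3 : phi n k u <= phi n k u * INR k ^ 3.
  by have := phi_ge0 n k u; nra.
case: (Rlt_le_dec (/ 32) u) => [u_large | u_le].
  by have := phi_large n_ge2 k_ge1 u_large; lra.
case: (Rlt_le_dec (/ (4 * INR n)) u) => [u_mid | u_small].
  by have := phi_medium n_ge2 k_ge1 u_mid u_le; lra.
exact: phi_small.
Qed.

Lemma bias_tiny_steps (n k : nat) (u : R) :
  (2 <= n)%N -> (1 <= k)%N -> 0 < u -> u <= / (4 * INR n * INR k) ->
  / 2 <= (((1 - u) ^ n) ^ 2) ^ k.
Proof.
move=> n_ge2 k_ge1 u_pos u_tiny.
have NK_pos : 0 < 4 * INR n * INR k by have := INR_ge2 n_ge2; have := INR_ge1 k_ge1; nra.
have small : 4 * INR n * INR k * u <= 1.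
  by have := Rmult_le_compat_l _ _ _ (Rlt_le _ _ NK_pos) u_tiny; rewrite Rinv_r; lra.
have u_le1 : u <= 1 by have := INR_ge2 n_ge2; have := INR_ge1 k_ge1; nra.
exact: (contraction_half (conj (Rlt_le _ _ u_pos) u_le1) small).
Qed.

Lemma variance_lb (n k : nat) (lam G u : R) :
  (2 <= n)%N -> (1 <= k)%N -> 0 < lam -> / (4 * INR n * INR k) < u ->
  / 67108864 * (G ^ 2 / (lam * INR n * INR k ^ 3)) <=
  G ^ 2 * phi n k u / (16 * lam * (INR n - 1)).
Proof.
move=> n_ge2 k_ge1 lam_pos u_big.
have N_ge2 := INR_ge2 n_ge2; have K_ge1 := INR_ge1 k_ge1.
have phi0 := phi_ge0 n k u.
have K3_pos : 0 < INR k ^ 3 by apply: pow_lt; lra.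
have den_pos : 0 < 16 * lam * INR n * INR k ^ 3.
  by repeat apply: Rmult_lt_0_compat; lra.
set c := G ^ 2 / (16 * lam * INR n * INR k ^ 3).
have c_ge0 : 0 <= c.
  by apply: Rmult_le_pos; [apply: pow2_ge_0 | apply: Rlt_le; apply: Rinv_0_lt_compat].
have via_phi : c * / 4194304 <= c * (phi n k u * INR k ^ 3).
  by apply: Rmult_le_compat_l => //; apply: phi_lb.
have drop_one : G ^ 2 * phi n k u / (16 * lam * INR n) <=
                G ^ 2 * phi n k u / (16 * lam * (INR n - 1)).
  apply: Rmult_le_compat_l; first by apply: Rmult_le_pos => //; apply: pow2_ge_0.
  by apply: Rinv_le_contravar; nra.
have e1 : / 67108864 * (G ^ 2 / (lam * INR n * INR k ^ 3)) = c * / 4194304.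
  by rewrite /c; field; lra.
have e2 : G ^ 2 * phi n k u / (16 * lam * INR n) = c * (phi n k u * INR k ^ 3).
  by rewrite /c; field; lra.
lra.
Qed.

Lemma hard_error_lb (n k : nat) (lam G eta : R) :
  (2 <= n)%N -> (1 <= k)%N -> 0 < lam -> 0 < eta ->
  lam / 2 * (((1 - eta * lam) ^ n) ^ 2) ^ k * 1 ^ 2 +
  lam / 2 * ((eta * (G / 2)) ^ 2 * power_spread n (1 - eta * lam) / (2 * (INR n - 1))) *
    geo (((1 - eta * lam) ^ n) ^ 2) k
  >= / 67108864 * Rmin lam (G ^ 2 / (lam * INR n * INR k ^ 3)).
Proof.
move=> n_ge2 k_ge1 lam_pos eta_pos.
have N_ge2 := INR_ge2 n_ge2.
set u := eta * lam; set z := ((1 - u) ^ n) ^ 2.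
have u_pos : 0 < u by rewrite /u; nra.
have bias_ge0 : 0 <= lam / 2 * z ^ k * 1 ^ 2.
  by rewrite pow1; have := pow_le z k (pow2_ge_0 _); nra.
have variance_eq :
  lam / 2 * ((eta * (G / 2)) ^ 2 * power_spread n (1 - u) / (2 * (INR n - 1))) * geo z k =
  G ^ 2 * phi n k u / (16 * lam * (INR n - 1)).
  rewrite /phi /u /z; move: (power_spread _ _) (geo _ _) => D g.
  field; lra.
have variance_ge0 : 0 <= G ^ 2 * phi n k u / (16 * lam * (INR n - 1)).
  apply: Rmult_le_pos; first by apply: Rmult_le_pos; [apply: pow2_ge_0 | apply: phi_ge0].
  by apply: Rlt_le; apply: Rinv_0_lt_compat; nra.
rewrite variance_eq; apply: Rle_ge.
have := Rmin_l lam (G ^ 2 / (lam * INR n * INR k ^ 3)).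
have := Rmin_r lam (G ^ 2 / (lam * INR n * INR k ^ 3)).
set M := Rmin _ _ => M_le_r M_le_lam.
case: (Rle_lt_dec u (/ (4 * INR n * INR k))) => [u_tiny | u_big].
  have := bias_tiny_steps n_ge2 k_ge1 u_pos u_tiny; rewrite -/z => z_k.
  have bias_ge : lam / 4 <= lam / 2 * z ^ k * 1 ^ 2 by rewrite pow1; nra.
  lra.
have := variance_lb G n_ge2 k_ge1 lam_pos u_big.
have := Rmult_le_compat_l (/ 67108864) _ _ ltac:(lra) M_le_r.
lra.
Qed.

Theorem proposition1 :
  exists c : R, 0 < c /\
  forall (n k : nat) (G lam : R),
    (2 <= n)%N -> ~~ odd n -> (1 <= k)%N ->
    0 < lam -> 0 < G -> G >= 2 * lam ->
    exists (a b : 'I_n -> R) (x0 xs : R),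
      assumption_A lam G a b x0 xs /\
      forall eta : R, 0 < eta ->
        rr_expect a b eta k (fun x => Favg a b x - Favg a b xs) x0
          >= c * Rmin lam (G ^ 2 / (lam * INR n * INR k ^ 3)).
Proof.
exists (/ 67108864); split; first by apply: Rinv_0_lt_compat; lra.
move=> n k G lam n_ge2 n_even k_ge1 lam_pos G_pos G_ge.
exists (hard_a lam), (hard_b G), 1, 0.
split; first exact: hard_assumption_A.
move=> eta eta_pos; rewrite (hard_rr_expect lam G n_ge2 n_even).
exact: hard_error_lb.
Qed.
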